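(* Let $\sigma\in\mathrm{NC}_n$ and $1\le i<j\le n$. Then $(i,j)\in\mathrm{Inv}_{\mathrm{NC}}(\sigma)$ if and only if $i$ is the smallest element of its cycle of $\sigma$ and either (1) $j$ belongs to the same cycle as $i$, or (2) $\sigma(j)<i<j$ and $j$ is minimal with respect to this property.
   Context: A set partition of $[n]$ is noncrossing if there are no distinct blocks $P,Q$ with $a,b\in P$, $c,d\in Q$, $a<c<b<d$; the associated permutation acts on each block $\{a_1<\dots<a_p\}$ by $a_j\mapsto a_{j-1}$ ($j\ge2$), $a_1\mapsto a_p$; $\mathrm{NC}_n$ is the set of these noncrossing permutations, whose cycles are the blocks. For $\sigma\in\mathrm{NC}_n$, $\mathrm{Inv}_{\mathrm{NC}}(\sigma)=\{(i,j)\in[n]^2: i<j,\ \sigma\circ(i\,j)\in\mathrm{NC}_n,\ \sigma(i)>\sigma(j)\}$, where $(i\,j)$ is the transposition. *)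

(* Ground set [n] = {1..n} is modelled by 'I_n = {0..n-1}
   (shift by one; only the order on the ground set matters). *)
From mathcomp Require Import all_boot all_order all_fingroup.
Set Implicit Arguments. Unset Strict Implicit. Unset Printing Implicit Defensive.

Section NC.
Variable n : nat.
Local Notation T := 'I_n.

Definition noncrossing (P : {set {set T}}) : Prop :=
  forall (B C : {set T}) (a b c d : T),
    B \in P -> C \in P -> B != C ->
    a \in B -> b \in B -> c \in C -> d \in C ->
    ~ [/\ (a < c)%N, (c < b)%N & (b < d)%N].

(* y is the image of x under the permutation associated with the block B
   (B = {a_1 < ... < a_p}): a_j |-> a_{j-1} for j >= 2, a_1 |-> a_p. *)
Definition block_image (B : {set T}) (x y : T) : Prop :=
  y \in B /\
  ( ((y < x)%N /\ forall z, z \in B -> ~ ((y < z)%N /\ (z < x)%N))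
  \/ ((forall z, z \in B -> ~ (z < x)%N) /\ forall z, z \in B -> (z <= y)%N)).

Definition assoc_perm (P : {set {set T}}) (s : {perm T}) : Prop :=
  forall x : T, block_image (pblock P x) x (s x).

Definition is_NC (s : {perm T}) : Prop :=
  exists P : {set {set T}},
    [/\ partition P [set: T], noncrossing P & assoc_perm P s].

(* Inv_NC(sigma): sigma o (i j) is (tperm i j * sigma)%g in MathComp,
   since (s * t) x = t (s x). *)
Definition Inv_NC (s : {perm T}) (i j : T) : Prop :=
  [/\ (i < j)%N, is_NC (tperm i j * s)%g & (s j < s i)%N].

End NC.

(* Put the points on a circle and draw, for every x, the chord from x to
   sigma(x).  A permutation lies in NC_n exactly when, for every x, the open
   arc running upward (cyclically) from sigma(x) to x is sigma-stable: the arc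
   contains no point of the block of x, and no other block can cross the chord.
   Composing with (i j) changes only the arcs of i and j, which now start at
   sigma(j) and sigma(i).  The condition sigma(j) < sigma(i) then forces i to
   be the least element of its cycle.  If j is in that cycle, sigma o (i j)
   splits it into two noncrossing cycles; otherwise it merges the two cycles,
   and the merged cycle is noncrossing iff sigma(j) < i and no chord
   k -> sigma(k) with i < k < j passes over i. *)

From mathcomp Require Import all_boot all_order all_fingroup zify.
Set Implicit Arguments. Unset Strict Implicit. Unset Printing Implicit Defensive.

Section Porbits.
Variable T : finType.
Implicit Types (s : {perm T}) (a b x y z : T).

Lemma mem_porbit1 s x : s x \in porbit s x.
Proof. by rewrite -[s x]/((s ^+ 1)%g x) mem_porbit. Qed.

Lemma porbit_eq s x y : y \in porbit s x -> porbit s y = porbit s x.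
Proof. by rewrite -eq_porbit_mem => /eqP. Qed.

Lemma porbit_trans s x y z : y \in porbit s x -> z \in porbit s y -> z \in porbit s x.
Proof. by move/porbit_eq ->. Qed.

Lemma porbits_preim s : porbits s = preim_partition (porbit s) [set: T].
Proof.
have Px x : porbit s x = [set y in [set: T] | porbit s x == porbit s y].
  by apply/setP => y; rewrite !inE eq_porbit_mem porbit_sym.
by apply/setP => B; apply/imsetP/imsetP => -[x _ ->]; exists x => //; exact/esym/Px.
Qed.

Lemma partition_porbits s : partition (porbits s) [set: T].
Proof. by rewrite porbits_preim preim_partitionP. Qed.

Lemma pblock_porbits s x : pblock (porbits s) x = porbit s x.
Proof.
have [_ tP _] := and3P (partition_porbits s).
by apply: def_pblock (imset_f _ _) (porbit_id s x).
Qed.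

Lemma porbit_mul_tperm_merge s a b : b \notin porbit s a ->
  {subset porbit s b <= porbit (tperm a b * s) a}.
Proof.
move=> bNa; set t := (tperm a b * s)%g.
have orbit_sb k : (s ^+ k.+1)%g b \in porbit t (s b).
  elim: k => [|k IHk]; first by rewrite expg1 porbit_id.
  rewrite expgSr permM; set y := (s ^+ k.+1)%g b in IHk *.
  have [->|yNb] := eqVneq y b; first exact: porbit_id.
  have yNa : y != a by apply: contraNneq bNa => <-; rewrite porbit_sym mem_porbit.
  have -> : s y = t y by rewrite permM tpermD // eq_sym.
  exact: porbit_trans IHk (mem_porbit1 t y).
have -> : porbit t a = porbit t (s b) by rewrite -(porbit_perm t 1) expg1 permM tpermL.
move=> w /porbitP [[|k] ->]; last exact: orbit_sb.
rewrite expg0 perm1 -{1}(iter_porbit s b) -permX.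
by case: #|_| (card_porbit_neq0 s b) => // m _; apply: orbit_sb.
Qed.

End Porbits.

Lemma val_perm_eq n (s : {perm 'I_n}) (x y : 'I_n) :
  ((s x : nat) == s y) = ((x : nat) == y).
Proof. by rewrite !val_eqE (inj_eq perm_inj). Qed.

(* [z] lies strictly inside the arc running upward from [a], past [n - 1]
   back to [0] when [b <= a], up to [b]; for [a = b] that is every [z != a]. *)
Definition in_arc (a b z : nat) : Prop :=
  (a < z /\ z < b)%N \/ (b <= a /\ (z < b \/ a < z))%N.

Lemma in_arc_end a b : ~ in_arc a b b.
Proof. rewrite /in_arc; lia. Qed.

Definition arc_closed n (s : {perm 'I_n}) : Prop :=
  forall x z : 'I_n, in_arc (s x) x z -> in_arc (s x) x (s z).

Section ArcClosed.
Variables (n : nat) (s : {perm 'I_n}).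
Implicit Types x y z a b c : 'I_n.
Hypothesis sC : arc_closed s.

Lemma in_arc_porbit x y z :
  in_arc (s x) x y -> z \in porbit s y -> in_arc (s x) x z.
Proof.
move=> xy /porbitP [k ->]; elim: k => [|k IHk]; first by rewrite expg0 perm1.
by rewrite expgSr permM; apply: sC.
Qed.

Lemma porbit_notin_arc x y : y \in porbit s x -> ~ in_arc (s x) x y.
Proof.
rewrite porbit_sym => xy /in_arc_porbit/(_ xy).
rewrite /in_arc; lia.
Qed.

Lemma porbit_cycle_range x y :
  (x <= s x)%N -> y \in porbit s x -> (x <= y)%N /\ (y <= s x)%N.
Proof. by move=> le_x_sx /porbit_notin_arc; rewrite /in_arc; lia. Qed.

Lemma porbit_descent_across x a b c :
  a \in porbit s x -> b \in porbit s x -> (a < c)%N -> (c < b)%N ->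
  c \notin porbit s x ->
  exists2 k, k \in porbit s x & [/\ (s k < c)%N, (c < k)%N & (k <= b)%N].
Proof.
move=> ax bx lt_ac lt_cb cNx.
pose P k := (k \in porbit s x) && (c < k)%N.
have bP : P b by rewrite /P bx lt_cb.
have [k /andP [kx lt_ck] kmin] := arg_minnP val bP.
exists k => //; split => //; last exact: kmin.
have skx : s k \in porbit s x := porbit_trans kx (mem_porbit1 s k).
rewrite ltnNge leq_eqVlt; apply/negP => /orP [/eqP /val_inj csk | lt_c_sk].
  by rewrite csk skx in cNx.
have le_k_sk : (k <= s k)%N by apply: kmin; rewrite /P skx lt_c_sk.
have ak : a \in porbit s k by apply: porbit_trans _ ax; rewrite porbit_sym.
have := porbit_cycle_range le_k_sk ak; lia.
Qed.

End ArcClosed.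

Section NoncrossingArcs.
Variable n : nat.
Implicit Types (s : {perm 'I_n}) (P : {set {set 'I_n}}) (B C : {set 'I_n}).

Lemma block_image_notin_arc B x y z : block_image B x y -> z \in B -> ~ in_arc y x z.
Proof.
move=> [_ [[lt_yx gapB] | [geB leB]]] zB; rewrite /in_arc.
  by have := gapB z zB; lia.
by have := geB z zB; have := leB z zB; lia.
Qed.

Lemma noncrossing_in_arc P B C (a b c d : 'I_n) :
  trivIset P -> noncrossing P -> B \in P -> C \in P -> B != C ->
  a \in B -> b \in B -> c \in C -> d \in C -> in_arc a b c -> in_arc a b d.
Proof.
move=> tP ncP BP CP BC aB bB cC dC.
have CB : C != B by rewrite eq_sym.
have ne w v : w \in C -> v \in B -> (w : nat) != v.
  move=> wC vB; apply: contraTneq wC => /val_inj ->.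
  by rewrite (disjointFr (trivIsetP tP _ _ BP CP BC) vB).
have cross U V u1 u2 v1 v2 : U \in P -> V \in P -> U != V ->
    u1 \in U -> u2 \in U -> v1 \in V -> v2 \in V ->
    ~ (u1 < v1 /\ v1 < u2 /\ u2 < v2)%N.
  by move=> UP VP UV u1U u2U v1V v2V [? [? ?]]; exact: ncP UP VP UV u1U u2U v1V v2V _.
have := cross _ _ _ _ _ _ CP BP CB dC cC aB bB.
have := cross _ _ _ _ _ _ BP CP BC aB bB cC dC.
have := cross _ _ _ _ _ _ CP BP CB cC dC bB aB.
have := cross _ _ _ _ _ _ BP CP BC bB aB dC cC.
have := ne _ _ dC aB; have := ne _ _ dC bB.
rewrite /in_arc; lia.
Qed.

Lemma NC_arc_closed s : is_NC s -> arc_closed s.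
Proof.
case=> P [partP ncP sP] x z xz; have [/eqP covP tP _] := and3P partP.
have inP w : w \in cover P by rewrite covP inE.
have xB : x \in pblock P x by rewrite mem_pblock.
have zC : z \in pblock P z by rewrite mem_pblock.
have zNB : z \notin pblock P x by apply/negP => /(block_image_notin_arc (sP x)).
have BC : pblock P x != pblock P z by apply: contraNneq zNB => ->.
have [sxB _] := sP x; have [szC _] := sP z.
exact: (noncrossing_in_arc tP ncP (pblock_mem (inP x)) (pblock_mem (inP z)) BC
          sxB xB zC szC xz).
Qed.

Lemma arc_closed_NC s : arc_closed s -> is_NC s.
Proof.
move=> sC; exists (porbits s); split; first exact: partition_porbits.
  move=> _ _ a b c d /imsetP [x _ ->] /imsetP [y _ ->] xy ax bx cy dy [lt_ac lt_cb lt_bd].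
  have cNx : c \notin porbit s x.
    by apply: contra xy => cx; rewrite -(porbit_eq cx) (porbit_eq cy).
  have [k kx [lt_skc lt_ck le_kb]] := porbit_descent_across sC ax bx lt_ac lt_cb cNx.
  have dc : d \in porbit s c by rewrite (porbit_eq cy).
  have /(in_arc_porbit sC)/(_ dc) : in_arc (s k) k c by rewrite /in_arc; lia.
  by rewrite /in_arc; lia.
move=> x; rewrite pblock_porbits; split; first exact: mem_porbit1.
by case: (ltnP (s x) x) => ?; [left | right]; split=> // w /(porbit_notin_arc sC);
  rewrite /in_arc; lia.
Qed.

Lemma is_NC_arc_closed s : is_NC s <-> arc_closed s.
Proof. by split; [apply: NC_arc_closed | apply: arc_closed_NC]. Qed.

End NoncrossingArcs.

Section MulTperm.
Variables (n : nat) (s : {perm 'I_n}) (i j : 'I_n).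
Implicit Types x y z k : 'I_n.
Hypothesis lt_ij : (i < j)%N.
Local Notation t := (tperm i j * s)%g.

Lemma mul_tperm_id k : (k : nat) != i -> (k : nat) != j -> t k = s k.
Proof. by move=> ki kj; rewrite permM tpermD // eq_sym -val_eqE. Qed.

Lemma mul_tperm_cycle_min : arc_closed t -> (s j < s i)%N -> (i <= s i)%N.
Proof.
move=> tC lt_sj_si; rewrite leqNgt; apply/negP => lt_si_i.
by have := tC j i; rewrite !permM tpermR tpermL /in_arc; lia.
Qed.

Lemma mul_tperm_merge_min : arc_closed t -> j \notin porbit s i ->
  (i <= s i)%N -> (s j < s i)%N ->
  (s j < i)%N /\ forall k, (s k < i)%N -> (i < k)%N -> (j <= k)%N.
Proof.
move=> tC jNi le_i_si lt_sj_si.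
have jt : j \in porbit t i := porbit_mul_tperm_merge jNi (porbit_id s j).
have sit : s i \in porbit t i.
  have iNj : i \notin porbit s j by rewrite porbit_sym.
  apply: porbit_trans jt _; rewrite tpermC.
  exact: porbit_mul_tperm_merge iNj _ (mem_porbit1 s i).
have sjNi : (s j : nat) != i.
  by apply: contraNneq jNi => /val_inj <-; rewrite porbit_sym mem_porbit1.
split.
  rewrite ltnNge; apply/negP => le_i_sj.
  by have := porbit_notin_arc tC sit; rewrite permM tpermL /in_arc; lia.
move=> k lt_ski lt_ik; rewrite leqNgt; apply/negP => lt_kj.
have tk : t k = s k by apply: mul_tperm_id; lia.
have /(in_arc_porbit tC)/(_ jt) : in_arc (t k) k i by rewrite tk /in_arc; lia.
by rewrite tk /in_arc; lia.
Qed.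

(* The arcs of [t] are those of [s], except that the arcs of [i] and [j]
   now start at [s j] and [s i]. *)
Lemma arc_closed_mul_tperm :
  arc_closed s ->
  (forall x, (x : nat) != i -> (x : nat) != j ->
     in_arc (s x) x i -> in_arc (s x) x (s j)) ->
  (forall x, (x : nat) != i -> (x : nat) != j ->
     in_arc (s x) x j -> in_arc (s x) x (s i)) ->
  (forall z, (z : nat) != i -> (z : nat) != j ->
     in_arc (s j) i z -> in_arc (s j) i (s z)) ->
  (forall z, (z : nat) != i -> (z : nat) != j ->
     in_arc (s i) j z -> in_arc (s i) j (s z)) ->
  (in_arc (s j) i j -> in_arc (s j) i (s i)) ->
  (in_arc (s i) j i -> in_arc (s i) j (s j)) ->
  arc_closed t.
Proof.
move=> sC xi xj iz jz ij ji x z.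
have ne k l : k <> l -> (k : nat) != l by move=> kl; apply/eqP => /val_inj.
rewrite !permM; case: tpermP => [-> | -> | /ne xNi /ne xNj];
  case: tpermP => [-> | -> | /ne zNi /ne zNj]; try by move/in_arc_end.
all: by [apply: xi | apply: xj | apply: iz | apply: jz | apply: ij | apply: ji | apply: sC].
Qed.

Lemma arc_closed_mul_tperm_split : arc_closed s ->
  (forall k, k \in porbit s i -> (i <= k)%N) -> j \in porbit s i -> arc_closed t.
Proof.
move=> sC imin ji; have le_i_si := imin _ (mem_porbit1 s i).
have ij : i \in porbit s j by rewrite porbit_sym.
have sji : s j \in porbit s i := porbit_trans ji (mem_porbit1 s j).
have sij : s i \in porbit s j := porbit_trans ij (mem_porbit1 s i).
have [_ le_j_si] := porbit_cycle_range sC le_i_si ji.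
have /andP [le_i_sj lt_sj_j] : (i <= s j < j)%N.
  by have := porbit_notin_arc sC ij; rewrite /in_arc; lia.
apply: arc_closed_mul_tperm => // [x _ _ xi | x _ _ xj | z zi zj | z zi zj | |].
- exact: (in_arc_porbit sC xi) sji.
- exact: (in_arc_porbit sC xj) sij.
- have : in_arc (s z) z j -> in_arc (s z) z (s i) := fun zj => in_arc_porbit sC zj sij.
  by move: (sC i z) (sC j z); rewrite /in_arc; lia.
- have : in_arc (s z) z i -> in_arc (s z) z j := fun zi => in_arc_porbit sC zi ji.
  by move: (sC i z); rewrite /in_arc; lia.
- by rewrite /in_arc; lia.
- by rewrite /in_arc; lia.
Qed.

Lemma arc_closed_mul_tperm_merge : arc_closed s ->
  (forall k, k \in porbit s i -> (i <= k)%N) -> (s j < i)%N ->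
  (forall k, (s k < i)%N -> (i < k)%N -> (j <= k)%N) -> arc_closed t.
Proof.
move=> sC imin lt_sj_i jmin; have le_i_si := imin _ (mem_porbit1 s i).
have jump y : (y < i)%N -> (i < s y)%N -> (j <= s y)%N.
  move=> lt_yi lt_isy; have iNy : i \notin porbit s y.
    by apply/negP; rewrite porbit_sym => /imin; lia.
  have [k _ [lt_ski lt_ik le_k_sy]] :=
    porbit_descent_across sC (porbit_id s y) (mem_porbit1 s y) lt_yi lt_isy iNy.
  by have := jmin k lt_ski lt_ik; lia.
apply: arc_closed_mul_tperm => // [x xi xj | x xi xj | z zi zj | z zi zj | |].
- by move: (jmin x) (sC x j); rewrite /in_arc; lia.
- have : (s x : nat) != s i by rewrite val_perm_eq.
  by move: (sC x i) (sC x j) (jump x); rewrite /in_arc; lia.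
- by move: (sC i z) (sC j z) (jump z); rewrite /in_arc; lia.
- by move: (sC i z) (sC j z) (jmin z); rewrite /in_arc; lia.
- by rewrite /in_arc; lia.
- by rewrite /in_arc; lia.
Qed.

End MulTperm.

Theorem proposition8p16 (n : nat) (s : {perm 'I_n}) (i j : 'I_n) :
  is_NC s -> (i < j)%N ->
  (Inv_NC s i j <->
   ((forall k : 'I_n, k \in porbit s i -> (i <= k)%N) /\
    (j \in porbit s i \/
     ([/\ (s j < i)%N, (i < j)%N &
        forall k : 'I_n, (s k < i)%N -> (i < k)%N -> (j <= k)%N])))).
Proof.
move=> /is_NC_arc_closed sC lt_ij.
split=> [[_ /is_NC_arc_closed tC lt_sj_si] | [imin cases]].
  have le_i_si := mul_tperm_cycle_min lt_ij tC lt_sj_si.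
  split=> [k ki | ]; first exact: (porbit_cycle_range sC le_i_si ki).1.
  have [ji | jNi] := boolP (j \in porbit s i); [by left | right].
  by have [lt_sj_i jmin] := mul_tperm_merge_min lt_ij tC jNi le_i_si lt_sj_si.
have le_i_si := imin _ (mem_porbit1 s i).
case: cases => [ji | [lt_sj_i _ jmin]]; last first.
  split=> //; last lia.
  exact/is_NC_arc_closed/arc_closed_mul_tperm_merge.
split=> //; first exact/is_NC_arc_closed/arc_closed_mul_tperm_split.
have sji : s j \in porbit s i := porbit_trans ji (mem_porbit1 s j).
have [_ le_sj_si] := porbit_cycle_range sC le_i_si sji.
have : (s j : nat) != s i by rewrite val_perm_eq; lia.
lia.
Qed.
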